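(* Let $I\subset\mathbb{R}$ be an open interval and let $\mathcal{L}:(0,\infty)\times I\to\mathbb{R}$, $(X,\phi)\mapsto\mathcal{L}(X,\phi)$, be a smooth function with $\mathcal{L}_X\neq 0$ everywhere. Define $p=\mathcal{L}$ and $\rho=2X\mathcal{L}_X-\mathcal{L}$, regarded as functions of the two independent variables $(X,\phi)$. Then the following are equivalent: (i) (isentropy) there exists a smooth nowhere-vanishing function $n:(0,\infty)\times I\to\mathbb{R}$ such that the Gibbs relation with $\mathrm{d}(s/n)=0$, namely $$\mathrm{d}\!\left(\frac{\rho+p}{n}\right)=\frac{1}{n}\,\mathrm{d}p \quad\Longleftrightarrow\quad \mathrm{d}\rho-(\rho+p)\frac{\mathrm{d}n}{n}=0,$$ holds identically as an equality of differential $1$-forms in $(X,\phi)$, i.e. $\rho_X=(\rho+p)\,n_X/n$ and $\rho_\phi=(\rho+p)\,n_\phi/n$; (ii) there exist a smooth function $f:I\to\mathbb{R}$ and a smooth function $G:(0,\infty)\to\mathbb{R}$ such that $\mathcal{L}(X,\phi)=G(\tilde X)$ with $\tilde X=e^{-2f(\phi)}X$; equivalently, after the field redefinition $\tilde\phi$ defined by $\tilde\phi_{,\mu}=e^{-f(\phi)}\phi_{,\mu}$ (so that $\tilde X=\tfrac12 g^{\mu\nu}\tilde\phi_{,\mu}\tilde\phi_{,\nu}$), the Lagrangian depends only on the kinetic term $\tilde X$ and not explicitly on $\tilde\phi$. Moreover, in this case $n$ is necessarily of the form $n=e^{f(\phi)}\sqrt{2X}\,\mathcal{L}_X$ (for $f$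 as in (ii), up to sign), and $-\mathcal{L}_\phi=2X\mathcal{L}_X f'(\phi)$; in terms of $\tilde X$ one has $n=\sqrt{2\tilde X}\,G'(\tilde X)$.
   Context: A scalar field $\phi$ on a spacetime with metric $g_{\mu\nu}$ of signature $(+,-,-,-)$ has action $S=\int\mathcal{L}(X,\phi)\sqrt{-g}\,\mathrm{d}^4x$ with kinetic term $X=\tfrac12 g^{\mu\nu}\phi_{,\mu}\phi_{,\nu}>0$; subscripts $X,\phi$ denote partial derivatives. Its stress tensor $T_{\mu\nu}=\mathcal{L}_X\phi_{,\mu}\phi_{,\nu}-\mathcal{L}g_{\mu\nu}$ is that of a perfect fluid with pressure $p=\mathcal{L}$, energy density $\rho=2X\mathcal{L}_X-\mathcal{L}$ and four-velocity $u_\mu=\phi_{,\mu}/\sqrt{2X}$. Thermodynamically, $n$ denotes the particle number density, $s$ the entropy density, and Gibbs' relation reads $\mathrm{d}((\rho+p)/n)=T\,\mathrm{d}(s/n)+\mathrm{d}p/n$; the flow is called isentropic when $\mathrm{d}(s/n)=0$. *)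

From Stdlib Require Import Reals Lra ClassicalEpsilon.
Open Scope R_scope.

Definition is_open_intvl (I : R -> Prop) : Prop :=
  (forall x y z, I x -> I z -> x <= y -> y <= z -> I y) /\
  (forall x, I x -> exists e, 0 < e /\ forall y, Rabs (y - x) < e -> I y).

Definition dom2 (I : R -> Prop) (X phi : R) : Prop := 0 < X /\ I phi.

Definition pos (X : R) : Prop := 0 < X.

Definition continuous2_at (F : R -> R -> R) (X phi : R) : Prop :=
  forall eps, 0 < eps -> exists delta, 0 < delta /\
    forall x y, Rabs (x - X) < delta -> Rabs (y - phi) < delta ->
      Rabs (F x y - F X phi) < eps.

Definition smooth1 (D : R -> Prop) (f : R -> R) : Prop :=
  exists F : nat -> R -> R, F O = f /\
    forall k x, D x -> derivable_pt_lim (F k) x (F (S k) x).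

(* C^oo on an open set D of R^2: all partial derivatives F i j
   (i times in the first variable, j times in the second) exist and are
   jointly continuous on D. *)
Definition smooth2 (D : R -> R -> Prop) (L : R -> R -> R) : Prop :=
  exists F : nat -> nat -> R -> R -> R, F O O = L /\
    forall i j X phi, D X phi ->
      continuous2_at (F i j) X phi /\
      derivable_pt_lim (fun x => F i j x phi) X (F (S i) j X phi) /\
      derivable_pt_lim (fun y => F i j X y) phi (F i (S j) X phi).

(* Derivatives (the value of the derivative wherever it exists). *)
Definition deriv1 (f : R -> R) (x : R) : R :=
  epsilon (inhabits 0) (fun l => derivable_pt_lim f x l).
Definition dX (F : R -> R -> R) (X phi : R) : R :=
  epsilon (inhabits 0) (fun l => derivable_pt_lim (fun x => F x phi) X l).
Definition dphi (F : R -> R -> R) (X phi : R) : R :=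
  epsilon (inhabits 0) (fun l => derivable_pt_lim (fun y => F X y) phi l).

Definition pres (L : R -> R -> R) : R -> R -> R := L.
Definition rho (L : R -> R -> R) : R -> R -> R :=
  fun X phi => 2 * X * dX L X phi - L X phi.

Definition isentropic_n (I : R -> Prop) (L n : R -> R -> R) : Prop :=
  smooth2 (dom2 I) n /\
  (forall X phi, dom2 I X phi -> n X phi <> 0) /\
  (forall X phi, dom2 I X phi ->
     dX (rho L) X phi = (rho L X phi + pres L X phi) * dX n X phi / n X phi /\
     dphi (rho L) X phi = (rho L X phi + pres L X phi) * dphi n X phi / n X phi).

Definition reduces_to (I : R -> Prop) (L : R -> R -> R) (f G : R -> R) : Prop :=
  smooth1 I f /\ smooth1 pos G /\
  (forall X phi, dom2 I X phi -> L X phi = G (exp (-2 * f phi) * X)).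

From Stdlib Require Import Reals Lra ClassicalEpsilon Classical FunctionalExtensionality Ranalysis5.
From Coquelicot Require Import Coquelicot.
Open Scope R_scope.

(* With p = L and rho = 2 X L_X - L one has
   rho + p = 2 X L_X, so the isentropy equations d rho = (rho + p) dn / n read
     L_X + 2 X L_XX = 2 X L_X n_X / n,   2 X L_Xphi - L_phi = 2 X L_X n_phi / n.
   The X-equation says that n / (sqrt(2X) L_X) does not depend on X; being
   continuous and nonzero on the interval I it has a constant sign s, so
   n = s exp(f(phi)) sqrt(2X) L_X with f smooth.  The phi-equation then turns
   into the first-order equation -L_phi = 2 X L_X f' ([lagrangian_pde]), which
   says that L is constant along the curves X = c exp(2 f(phi)): this is
   condition (ii).  Conversely (ii) gives the first-order equation by the chain
   rule, and then n = exp(f) sqrt(2X) L_X solves the isentropy equations. *)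

Definition convex_set (S : R -> Prop) : Prop :=
  forall x y z, S x -> S z -> x <= y -> y <= z -> S y.
Definition open_set (S : R -> Prop) : Prop :=
  forall x, S x -> exists e, 0 < e /\ forall y, Rabs (y - x) < e -> S y.

Lemma epsilon_derivative f x l :
  derivable_pt_lim f x l -> epsilon (inhabits 0) (fun l => derivable_pt_lim f x l) = l.
Proof.
  intro H. apply (uniqueness_limite f x); [|exact H].
  apply epsilon_spec. exists l; exact H.
Qed.

Lemma deriv1_of_lim f x l : derivable_pt_lim f x l -> deriv1 f x = l.
Proof. apply epsilon_derivative. Qed.
Lemma dX_of_lim F X phi l :
  derivable_pt_lim (fun x => F x phi) X l -> dX F X phi = l.
Proof. apply epsilon_derivative. Qed.
Lemma dphi_of_lim F X phi l :
  derivable_pt_lim (fun y => F X y) phi l -> dphi F X phi = l.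
Proof. apply epsilon_derivative. Qed.

Lemma derivable_pt_lim_locally f g x l :
  (exists d, 0 < d /\ forall y, Rabs (y - x) < d -> f y = g y) ->
  derivable_pt_lim g x l -> derivable_pt_lim f x l.
Proof.
  intros [d [Hd Hfg]] H eps Heps.
  destruct (H eps Heps) as [del Hdel].
  assert (Hm : 0 < Rmin d del) by (apply Rmin_glb_lt; [lra | apply cond_pos]).
  exists (mkposreal _ Hm). intros h Hh0 Hh. simpl in Hh.
  rewrite (Hfg (x + h)), (Hfg x).
  - apply Hdel; auto. eapply Rlt_le_trans; [exact Hh | apply Rmin_r].
  - rewrite Rminus_eq_0, Rabs_R0; lra.
  - replace (x + h - x) with h by ring. eapply Rlt_le_trans; [exact Hh | apply Rmin_l].
Qed.

Lemma MVT_unordered f f' a b :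
  (forall c, Rmin a b <= c <= Rmax a b -> derivable_pt_lim f c (f' c)) ->
  exists c, Rmin a b <= c <= Rmax a b /\ f b - f a = f' c * (b - a).
Proof.
  intro H. destruct (Rtotal_order a b) as [Hab | [Hab | Hab]].
  - destruct (MVT_cor2 f f' a b Hab) as [c [Hc1 Hc2]].
    + intros c Hc. apply H. rewrite Rmin_left, Rmax_right by lra. lra.
    + exists c. rewrite Rmin_left, Rmax_right by lra. split; [lra | exact Hc1].
  - subst. exists b. rewrite Rmin_left, Rmax_left by lra. split; [lra | ring].
  - destruct (MVT_cor2 f f' b a Hab) as [c [Hc1 Hc2]].
    + intros c Hc. apply H. rewrite Rmin_right, Rmax_left by lra. lra.
    + exists c. rewrite Rmin_right, Rmax_left by lra. split; [lra |].
      replace (f b - f a) with (- (f a - f b)) by ring. rewrite Hc1. ring.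
Qed.

Lemma constant_on_convex S f : convex_set S ->
  (forall x, S x -> derivable_pt_lim f x 0) -> forall a b, S a -> S b -> f a = f b.
Proof.
  intros HS H a b Ha Hb.
  destruct (MVT_unordered f (fun _ => 0) a b) as [c [_ Hc]]; [| lra].
  intros c Hc. apply H. destruct (Rle_dec a b).
  - rewrite Rmin_left, Rmax_right in Hc by lra. apply (HS a c b); tauto.
  - rewrite Rmin_right, Rmax_left in Hc by lra. apply (HS b c a); tauto.
Qed.

Lemma no_sign_change S g : convex_set S ->
  (forall x, S x -> continuity_pt g x) -> (forall x, S x -> g x <> 0) ->
  forall a b, S a -> S b -> a < b -> ~ (g a < 0 < g b).
Proof.
  intros HS Hc Hn a b Ha Hb Hab [Hga Hgb].
  assert (Hseg : forall c, a <= c <= b -> S c) by (intros c Hc'; apply (HS a c b); tauto).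
  destruct (IVT_interv g a b (fun c Hc' => Hc c (Hseg c Hc')) Hab Hga Hgb) as [z [Hz Hgz]].
  exact (Hn z (Hseg z Hz) Hgz).
Qed.

Lemma constant_sign S g : convex_set S ->
  (forall x, S x -> continuity_pt g x) -> (forall x, S x -> g x <> 0) ->
  forall a b, S a -> S b -> 0 < g a * g b.
Proof.
  intros HS Hc Hn.
  assert (Hopp : forall a b, S a -> S b -> a < b -> ~ (- g a < 0 < - g b)).
  { apply (no_sign_change S (fun x => - g x)); auto.
    - intros x Hx. apply continuity_pt_opp, Hc, Hx.
    - intros x Hx. specialize (Hn x Hx). lra. }
  assert (Hlt : forall a b, S a -> S b -> a < b -> 0 < g a * g b).
  { intros a b Ha Hb Hab.
    pose proof (no_sign_change S g HS Hc Hn a b Ha Hb Hab).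
    pose proof (Hopp a b Ha Hb Hab). pose proof (Hn a Ha). pose proof (Hn b Hb).
    destruct (Rtotal_order (g a) 0) as [? | [? | ?]];
      destruct (Rtotal_order (g b) 0) as [? | [? | ?]]; try tauto; try nra. }
  intros a b Ha Hb. destruct (Rtotal_order a b) as [? | [-> | ?]].
  - auto.
  - pose proof (Hn b Hb). nra.
  - rewrite Rmult_comm; auto.
Qed.

Lemma smooth1_of_stable_class (D : R -> Prop) (P : (R -> R) -> Prop) :
  (forall h, P h -> exists h', P h' /\ forall x, D x -> derivable_pt_lim h x (h' x)) ->
  forall h, P h -> smooth1 D h.
Proof.
  intros H h Hh.
  assert (next : forall s : {g : R -> R | P g}, {s' : {g : R -> R | P g} |
      forall x, D x -> derivable_pt_lim (proj1_sig s) x (proj1_sig s' x)}).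
  { intros [g Hg].
    destruct (constructive_indefinite_description _ (H g Hg)) as [g' [Hg' Hd]].
    exists (exist _ g' Hg'). exact Hd. }
  exists (fun k => proj1_sig (Nat.iter k (fun s => proj1_sig (next s)) (exist _ h Hh))).
  split; [reflexivity |]. intros k x Dx. apply (proj2_sig (next _)), Dx.
Qed.

Lemma smooth1_derivative D h :
  smooth1 D h -> exists h', smooth1 D h' /\ forall x, D x -> derivable_pt_lim h x (h' x).
Proof.
  intros [F [H0 H]]. exists (F 1%nat). split.
  - exists (fun k => F (S k)). split; auto.
  - subst h. apply H.
Qed.

Lemma smooth1_derivable D h x : smooth1 D h -> D x -> derivable_pt_lim h x (deriv1 h x).
Proof.
  intros [F [H0 H]] Dx. subst h. rewrite (deriv1_of_lim _ _ _ (H O x Dx)). apply H, Dx.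
Qed.

Inductive ring_closure (B : (R -> R) -> Prop) : (R -> R) -> Prop :=
 | rc_base h : B h -> ring_closure B h
 | rc_add a b : ring_closure B a -> ring_closure B b -> ring_closure B (fun x => a x + b x)
 | rc_mul a b : ring_closure B a -> ring_closure B b -> ring_closure B (fun x => a x * b x).

Lemma smooth1_ring_closure D B :
  (forall h, B h -> exists h', ring_closure B h' /\
     forall x, D x -> derivable_pt_lim h x (h' x)) ->
  forall h, ring_closure B h -> smooth1 D h.
Proof.
  intro H. apply smooth1_of_stable_class. intros h Hh; induction Hh.
  - apply H; auto.
  - destruct IHHh1 as [a' [Ha Hda]], IHHh2 as [b' [Hb Hdb]].
    exists (fun x => a' x + b' x). split; [apply rc_add; auto |].
    intros x Dx. exact (derivable_pt_lim_plus a b x _ _ (Hda x Dx) (Hdb x Dx)).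
  - destruct IHHh1 as [a' [Ha Hda]], IHHh2 as [b' [Hb Hdb]].
    exists (fun x => a' x * b x + a x * b' x). split; [apply rc_add; apply rc_mul; auto |].
    intros x Dx. exact (derivable_pt_lim_mult a b x _ _ (Hda x Dx) (Hdb x Dx)).
Qed.

Definition smooth_or_composite (D : R -> Prop) (h : R -> R) : Prop :=
  smooth1 D h \/ exists (E : R -> Prop) g u, smooth1 E g /\ smooth1 D u /\
     (forall x, D x -> E (u x)) /\ h = (fun x => g (u x)).

Lemma smooth1_sums_products_composites D h :
  ring_closure (smooth_or_composite D) h -> smooth1 D h.
Proof.
  apply smooth1_ring_closure. intros h0 [Hs | [E [g [u [Hg [Hu [HE ->]]]]]]].
  - destruct (smooth1_derivative _ _ Hs) as [h1 [Hh1 Hd]].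
    exists h1. split; [constructor; left |]; auto.
  - destruct (smooth1_derivative _ _ Hg) as [g' [Hg' Hdg]].
    destruct (smooth1_derivative _ _ Hu) as [u' [Hu' Hdu]].
    exists (fun x => g' (u x) * u' x). split.
    + apply rc_mul; constructor; [right; exists E, g', u | left]; auto.
    + intros x Dx. exact (derivable_pt_lim_comp u g x _ _ (Hdu x Dx) (Hdg _ (HE x Dx))).
Qed.

Lemma smooth1_mul D a b : smooth1 D a -> smooth1 D b -> smooth1 D (fun x => a x * b x).
Proof. intros; apply smooth1_sums_products_composites, rc_mul; constructor; left; auto. Qed.

Lemma smooth1_comp D E g u : smooth1 E g -> smooth1 D u -> (forall x, D x -> E (u x)) ->
  smooth1 D (fun x => g (u x)).
Proof. intros; apply smooth1_sums_products_composites; constructor; right; exists E, g, u; auto. Qed.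

Lemma smooth1_const D c : smooth1 D (fun _ => c).
Proof.
  exists (fun k => match k with O => fun _ => c | S _ => fun _ => 0 end). split; auto.
  intros [|k] x _; apply derivable_pt_lim_const.
Qed.

Lemma smooth1_id D : smooth1 D (fun x => x).
Proof.
  exists (fun k => match k with O => fun x => x | 1%nat => fun _ => 1 | _ => fun _ => 0 end).
  split; auto.
  intros [|[|k]] x _; [apply derivable_pt_lim_id | apply derivable_pt_lim_const ..].
Qed.

Lemma smooth1_exp D : smooth1 D exp.
Proof. exists (fun _ => exp). split; auto. intros; apply derivable_pt_lim_exp. Qed.

Lemma derivable_pt_lim_inv f x l : derivable_pt_lim f x l -> f x <> 0 ->
  derivable_pt_lim (fun y => / f y) x (- l / f x ^ 2).
Proof.
  intros H Hn.
  pose proof (derivable_pt_lim_div (fun _ => 1) f x 0 l (derivable_pt_lim_const 1 x) H Hn) as H2.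
  replace (fun y => / f y) with (div_fct (fun _ => 1) f)
    by (apply functional_extensionality; intro; unfold div_fct, Rdiv; ring).
  replace (- l / f x ^ 2) with ((0 * f x - l * 1) / (f x)²) by (unfold Rsqr; field; auto).
  exact H2.
Qed.

Lemma smooth1_inv : smooth1 (fun x => x <> 0) (fun x => / x).
Proof.
  apply (smooth1_ring_closure _ (fun h => h = (fun x => / x) \/ exists c, h = (fun _ => c)));
    [| constructor; left; reflexivity].
  intros h [-> | [c ->]].
  - exists (fun x => (-1) * (/ x * / x)). split.
    + apply rc_mul; [constructor; right; eauto | apply rc_mul; constructor; left; auto].
    + intros x Hx. pose proof (derivable_pt_lim_inv (fun x => x) x 1 (derivable_pt_lim_id x) Hx) as H.
      replace ((-1) * (/ x * / x)) with (- 1 / x ^ 2) by (field; auto). exact H.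
  - exists (fun _ => 0). split; [constructor; right; eauto |]. intros; apply derivable_pt_lim_const.
Qed.

Lemma smooth1_ln : smooth1 pos ln.
Proof.
  destruct smooth1_inv as [F [H0 H1]].
  exists (fun k => match k with O => ln | S k' => F k' end). split; auto.
  intros [|k] x Dx; unfold pos in Dx.
  - rewrite H0. apply derivable_pt_lim_ln; auto.
  - apply H1. lra.
Qed.

(* [sqrt] is smooth on (0, oo): the derivatives of [sqrt] and [1/sqrt] are
   polynomials in [1/sqrt]. *)
Lemma smooth1_sqrt : smooth1 pos sqrt.
Proof.
  apply (smooth1_ring_closure _
    (fun h => h = sqrt \/ h = (fun x => / sqrt x) \/ exists c, h = (fun _ => c)));
    [| constructor; left; reflexivity].
  intros h [-> | [-> | [c ->]]].
  - exists (fun x => / 2 * / sqrt x). split.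
    + apply rc_mul; constructor; [right; right; eauto | right; left; auto].
    + intros x Hx. unfold pos in Hx. pose proof (derivable_pt_lim_sqrt x Hx) as H.
      assert (0 < sqrt x) by (apply sqrt_lt_R0; auto).
      replace (/ 2 * / sqrt x) with (/ (2 * sqrt x)) by (field; lra). exact H.
  - exists (fun x => (- / 2) * (/ sqrt x * (/ sqrt x * / sqrt x))). split.
    + apply rc_mul; [constructor; right; right; eauto |].
      apply rc_mul; [constructor; right; left; auto | apply rc_mul; constructor; right; left; auto].
    + intros x Hx. unfold pos in Hx.
      assert (Hs0 : 0 < sqrt x) by (apply sqrt_lt_R0; auto).
      pose proof (derivable_pt_lim_inv sqrt x _ (derivable_pt_lim_sqrt x Hx) ltac:(lra)) as H.
      replace ((- / 2) * (/ sqrt x * (/ sqrt x * / sqrt x))) with (- / (2 * sqrt x) / sqrt x ^ 2)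
        by (field; lra). exact H.
  - exists (fun _ => 0). split; [constructor; right; right; eauto |].
    intros; apply derivable_pt_lim_const.
Qed.

Definition smooth_family (D : R -> R -> Prop) (F : nat -> nat -> R -> R -> R) : Prop :=
  forall i j X phi, D X phi ->
    continuous2_at (F i j) X phi /\
    derivable_pt_lim (fun x => F i j x phi) X (F (S i) j X phi) /\
    derivable_pt_lim (fun y => F i j X y) phi (F i (S j) X phi).

Lemma continuous2_at_iff F X phi : continuous2_at F X phi <-> continuity_2d_pt F X phi.
Proof.
  split.
  - intros H eps. destruct (H eps (cond_pos eps)) as [d [Hd Hd2]].
    exists (mkposreal d Hd). intros u v Hu Hv. apply Hd2; auto.
  - intros H eps He. destruct (H (mkposreal eps He)) as [d Hd].
    exists d. split; [apply cond_pos |]. intros; apply Hd; auto.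
Qed.

(* They come with formal partial derivatives [diffX], [diffphi],
   which commute on the nose; this yields smoothness of such expressions
   without a general Leibniz formula for mixed derivatives. *)
Inductive expr2 : Type :=
 | ex_fam (F : nat -> nat -> R -> R -> R) (i j : nat)
 | ex_X (B : nat -> R -> R) (k : nat)
 | ex_phi (A : nat -> R -> R) (k : nat)
 | ex_cst (c : R)
 | ex_add (a b : expr2)
 | ex_mul (a b : expr2).

Fixpoint eval2 (e : expr2) : R -> R -> R :=
  match e with
  | ex_fam F i j => F i j
  | ex_X B k => fun X _ => B k X
  | ex_phi A k => fun _ y => A k y
  | ex_cst c => fun _ _ => c
  | ex_add a b => fun X y => eval2 a X y + eval2 b X y
  | ex_mul a b => fun X y => eval2 a X y * eval2 b X y
  end.

Fixpoint diffX (e : expr2) : expr2 :=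
  match e with
  | ex_fam F i j => ex_fam F (S i) j
  | ex_X B k => ex_X B (S k)
  | ex_phi _ _ | ex_cst _ => ex_cst 0
  | ex_add a b => ex_add (diffX a) (diffX b)
  | ex_mul a b => ex_add (ex_mul (diffX a) b) (ex_mul a (diffX b))
  end.

Fixpoint diffphi (e : expr2) : expr2 :=
  match e with
  | ex_fam F i j => ex_fam F i (S j)
  | ex_phi A k => ex_phi A (S k)
  | ex_X _ _ | ex_cst _ => ex_cst 0
  | ex_add a b => ex_add (diffphi a) (diffphi b)
  | ex_mul a b => ex_add (ex_mul (diffphi a) b) (ex_mul a (diffphi b))
  end.

Lemma diffX_diffphi e X y : eval2 (diffX (diffphi e)) X y = eval2 (diffphi (diffX e)) X y.
Proof. induction e; simpl; try rewrite IHe1, IHe2; ring. Qed.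

Section SmoothExpressions.
Variable I : R -> Prop.
Hypothesis HIo : open_set I.

Lemma dom2_open_X X y :
  dom2 I X y -> exists d, 0 < d /\ forall x, Rabs (x - X) < d -> dom2 I x y.
Proof.
  intros [HX Hy]. exists X. split; auto. intros x Hx. split; auto.
  unfold Rabs in Hx; destruct (Rcase_abs (x - X)); lra.
Qed.

Lemma dom2_open_phi X y :
  dom2 I X y -> exists d, 0 < d /\ forall z, Rabs (z - y) < d -> dom2 I X z.
Proof.
  intros [HX Hy]. destruct (HIo y Hy) as [d [Hd H]]. exists d. split; auto.
  intros z Hz. split; auto.
Qed.

Lemma dom2_open X y : dom2 I X y -> exists d, 0 < d /\
  forall u v, Rabs (u - X) < d -> Rabs (v - y) < d -> dom2 I u v.
Proof.
  intros [HX Hy]. destruct (HIo y Hy) as [d [Hd H]].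
  exists (Rmin X d). split; [apply Rmin_glb_lt; auto |].
  intros u v Hu Hv. split.
  - assert (Rabs (u - X) < X) by (eapply Rlt_le_trans; [exact Hu | apply Rmin_l]).
    unfold Rabs in H0; destruct (Rcase_abs (u - X)); lra.
  - apply H. eapply Rlt_le_trans; [exact Hv | apply Rmin_r].
Qed.

Fixpoint admissible (e : expr2) : Prop :=
  match e with
  | ex_fam F _ _ => smooth_family (dom2 I) F
  | ex_X B _ => forall k X, 0 < X -> derivable_pt_lim (B k) X (B (S k) X)
  | ex_phi A _ => forall k y, I y -> derivable_pt_lim (A k) y (A (S k) y)
  | ex_cst _ => True
  | ex_add a b | ex_mul a b => admissible a /\ admissible b
  end.

Lemma admissible_diffX e : admissible e -> admissible (diffX e).
Proof. induction e; simpl; tauto. Qed.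
Lemma admissible_diffphi e : admissible e -> admissible (diffphi e).
Proof. induction e; simpl; tauto. Qed.

Lemma eval2_diffX e : admissible e -> forall X y, dom2 I X y ->
  derivable_pt_lim (fun x => eval2 e x y) X (eval2 (diffX e) X y).
Proof.
  induction e; simpl; intros Ho X y Hd.
  - apply Ho; auto.
  - apply Ho, Hd.
  - apply derivable_pt_lim_const.
  - apply derivable_pt_lim_const.
  - destruct Ho. exact (derivable_pt_lim_plus _ _ X _ _ (IHe1 H X y Hd) (IHe2 H0 X y Hd)).
  - destruct Ho. exact (derivable_pt_lim_mult _ _ X _ _ (IHe1 H X y Hd) (IHe2 H0 X y Hd)).
Qed.

Lemma eval2_diffphi e : admissible e -> forall X y, dom2 I X y ->
  derivable_pt_lim (fun z => eval2 e X z) y (eval2 (diffphi e) X y).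
Proof.
  induction e; simpl; intros Ho X y Hd.
  - apply Ho; auto.
  - apply derivable_pt_lim_const.
  - apply Ho, Hd.
  - apply derivable_pt_lim_const.
  - destruct Ho. exact (derivable_pt_lim_plus _ _ y _ _ (IHe1 H X y Hd) (IHe2 H0 X y Hd)).
  - destruct Ho. exact (derivable_pt_lim_mult _ _ y _ _ (IHe1 H X y Hd) (IHe2 H0 X y Hd)).
Qed.

Lemma eval2_continuous e : admissible e -> forall X y, dom2 I X y ->
  continuity_2d_pt (eval2 e) X y.
Proof.
  induction e; simpl; intros Ho X y Hd.
  - apply continuous2_at_iff, Ho, Hd.
  - apply (continuity_1d_2d_pt_comp (B k) (fun u _ => u)); [| apply continuity_2d_pt_id1].
    apply derivable_continuous_pt. exists (B (S k) X). apply Ho, Hd.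
  - apply (continuity_1d_2d_pt_comp (A k) (fun _ v => v)); [| apply continuity_2d_pt_id2].
    apply derivable_continuous_pt. exists (A (S k) y). apply Ho, Hd.
  - apply continuity_2d_pt_const.
  - destruct Ho. apply continuity_2d_pt_plus; auto.
  - destruct Ho. apply continuity_2d_pt_mult; auto.
Qed.

Lemma diffX_congr e1 e2 : admissible e1 -> admissible e2 ->
  (forall X y, dom2 I X y -> eval2 e1 X y = eval2 e2 X y) ->
  forall X y, dom2 I X y -> eval2 (diffX e1) X y = eval2 (diffX e2) X y.
Proof.
  intros H1 H2 Heq X y Hd. apply (uniqueness_limite (fun x => eval2 e1 x y) X).
  - apply eval2_diffX; auto.
  - apply derivable_pt_lim_locally with (fun x => eval2 e2 x y); [| apply eval2_diffX; auto].
    destruct (dom2_open_X X y Hd) as [d [Hd0 Hd1]]. exists d; split; auto.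
Qed.

Definition iterX i e := Nat.iter i diffX e.
Definition iterphi j e := Nat.iter j diffphi e.

Lemma admissible_iter i j e : admissible e -> admissible (iterX i (iterphi j e)).
Proof.
  intro H. induction i; simpl; [| apply admissible_diffX; auto].
  induction j; simpl; [| apply admissible_diffphi]; auto.
Qed.

Lemma iterX_S i e : iterX (S i) e = iterX i (diffX e).
Proof. unfold iterX. induction i; simpl; auto. simpl in IHi. rewrite IHi. reflexivity. Qed.

Lemma iterX_diffphi i e : admissible e -> forall X y, dom2 I X y ->
  eval2 (iterX i (diffphi e)) X y = eval2 (diffphi (iterX i e)) X y.
Proof.
  revert e. induction i; intros e Ho X y Hd; [reflexivity |].
  rewrite !iterX_S. transitivity (eval2 (iterX i (diffphi (diffX e))) X y).
  - clear IHi. revert X y Hd. induction i; simpl; [intros; apply diffX_diffphi |].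
    apply diffX_congr; auto.
    + apply (admissible_iter i 0), admissible_diffX, admissible_diffphi, Ho.
    + apply (admissible_iter i 0), admissible_diffphi, admissible_diffX, Ho.
  - apply IHi; auto. apply admissible_diffX; auto.
Qed.

Lemma smooth2_eval2 e : admissible e -> smooth2 (dom2 I) (eval2 e).
Proof.
  intro Ho. exists (fun i j => eval2 (iterX i (iterphi j e))). split; [reflexivity |].
  intros i j X y Hd. split; [| split].
  - apply continuous2_at_iff, eval2_continuous; auto. apply admissible_iter; auto.
  - apply (eval2_diffX (iterX i (iterphi j e))); auto. apply admissible_iter; auto.
  - change (iterphi (S j) e) with (diffphi (iterphi j e)).
    rewrite iterX_diffphi; auto; [| apply (admissible_iter 0); auto].
    apply eval2_diffphi; auto. apply admissible_iter; auto.
Qed.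

End SmoothExpressions.

Lemma derivative_increment g gy y (eps : R) : 0 < eps -> derivable_pt_lim g y gy ->
  exists d, 0 < d /\ forall v, Rabs (v - y) < d ->
    Rabs (g v - g y - gy * (v - y)) <= eps * Rabs (v - y).
Proof.
  intros Heps Hg. destruct (Hg eps Heps) as [d Hd].
  exists d. split; [apply cond_pos |]. intros v Hv.
  destruct (Req_dec v y) as [-> | E].
  - rewrite !Rminus_eq_0, Rmult_0_r, Rminus_0_r, Rabs_R0. lra.
  - assert (Hh : v - y <> 0) by lra.
    specialize (Hd (v - y) Hh Hv). replace (y + (v - y)) with v in Hd by ring.
    replace (g v - g y - gy * (v - y)) with (((g v - g y) / (v - y) - gy) * (v - y))
      by (field; exact Hh).
    rewrite Rabs_mult. apply Rmult_le_compat_r; [apply Rabs_pos | lra].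
Qed.

Lemma partial_increment_X f fx x y (eps : R) : 0 < eps ->
  (exists d, 0 < d /\ forall u v, Rabs (u - x) < d -> Rabs (v - y) < d ->
      derivable_pt_lim (fun z => f z v) u (fx u v)) ->
  continuity_2d_pt fx x y ->
  exists d, 0 < d /\ forall u v, Rabs (u - x) < d -> Rabs (v - y) < d ->
    Rabs (f u v - f x v - fx x y * (u - x)) <= eps * Rabs (u - x).
Proof.
  intros Heps [d0 [Hd0 Hder]] Hc.
  destruct (Hc (mkposreal _ Heps)) as [d1 Hd1].
  assert (Hm : 0 < Rmin d0 d1) by (apply Rmin_glb_lt; [lra | apply cond_pos]).
  exists (Rmin d0 d1). split; [exact Hm |]. intros u v Hu Hv.
  pose proof (Rmin_l d0 d1). pose proof (Rmin_r d0 d1).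
  assert (Hbetween : forall c, Rmin x u <= c <= Rmax x u -> Rabs (c - x) <= Rabs (u - x)).
  { intros c Hc'. unfold Rmin, Rmax in Hc'. destruct (Rle_dec x u);
      unfold Rabs; destruct (Rcase_abs (c - x)), (Rcase_abs (u - x)); lra. }
  destruct (MVT_unordered (fun z => f z v) (fun z => fx z v) x u) as [c [Hc1 Hc2]].
  { intros c Hc'. apply Hder; [| lra]. pose proof (Hbetween c Hc'). lra. }
  rewrite Hc2. replace (fx c v * (u - x) - fx x y * (u - x)) with
    ((fx c v - fx x y) * (u - x)) by ring.
  rewrite Rabs_mult. apply Rmult_le_compat_r; [apply Rabs_pos |].
  left. apply (Hd1 c v); simpl; [| lra]. pose proof (Hbetween c Hc1). lra.
Qed.

Lemma differentiable_from_partials f fx fy x y :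
  (exists d, 0 < d /\ forall u v, Rabs (u - x) < d -> Rabs (v - y) < d ->
      derivable_pt_lim (fun z => f z v) u (fx u v)) ->
  continuity_2d_pt fx x y ->
  derivable_pt_lim (fun z => f x z) y fy ->
  differentiable_pt_lim f x y (fx x y) fy.
Proof.
  intros Hder Hc Hy eps.
  assert (He2 : 0 < eps / 2) by (generalize (cond_pos eps); lra).
  destruct (partial_increment_X f fx x y _ He2 Hder Hc) as [d1 [Hd1 HX]].
  destruct (derivative_increment _ _ y _ He2 Hy) as [d2 [Hd2 HY]].
  exists (mkposreal _ (Rmin_glb_lt _ _ _ Hd1 Hd2)). intros u v Hu Hv. simpl in Hu, Hv.
  pose proof (Rmin_l d1 d2). pose proof (Rmin_r d1 d2).
  specialize (HX u v ltac:(lra) ltac:(lra)). specialize (HY v ltac:(lra)).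
  replace (f u v - f x y - (fx x y * (u - x) + fy * (v - y))) with
    ((f u v - f x v - fx x y * (u - x)) + (f x v - f x y - fy * (v - y))) by ring.
  eapply Rle_trans; [apply Rabs_triang |].
  generalize (Rmax_l (Rabs (u - x)) (Rabs (v - y))) (Rmax_r (Rabs (u - x)) (Rabs (v - y))).
  generalize (cond_pos eps). nra.
Qed.

Definition lagrangian_pde (I : R -> Prop) (L : R -> R -> R) (f : R -> R) : Prop :=
  forall X phi, dom2 I X phi -> - dphi L X phi = 2 * X * dX L X phi * deriv1 f phi.

Lemma reduction_partials I L f G : open_set I -> reduces_to I L f G ->
  forall X phi, dom2 I X phi ->
    dX L X phi = deriv1 G (exp (-2 * f phi) * X) * exp (-2 * f phi) /\
    dphi L X phi = deriv1 G (exp (-2 * f phi) * X) * (exp (-2 * f phi) * (-2 * deriv1 f phi) * X).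
Proof.
  intros HIo [Hf [HG HL]] X phi [HX Hphi].
  assert (HXt : pos (exp (-2 * f phi) * X)) by (pose proof (exp_pos (-2 * f phi)); red; nra).
  pose proof (smooth1_derivable _ _ _ HG HXt) as dG.
  pose proof (smooth1_derivable _ _ _ Hf Hphi) as df.
  split.
  - apply dX_of_lim. apply derivable_pt_lim_locally with (fun x => G (exp (-2 * f phi) * x)).
    + exists X. split; auto. intros x Hx. apply HL. split; auto.
      unfold Rabs in Hx; destruct (Rcase_abs (x - X)); lra.
    + replace (deriv1 G (exp (-2 * f phi) * X) * exp (-2 * f phi))
        with (deriv1 G (exp (-2 * f phi) * X) * (exp (-2 * f phi) * 1)) by ring.
      apply (derivable_pt_lim_comp (fun x => exp (-2 * f phi) * x) G); [| exact dG].
      apply derivable_pt_lim_scal, derivable_pt_lim_id.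
  - apply dphi_of_lim. apply derivable_pt_lim_locally with (fun y => G (exp (-2 * f y) * X)).
    + destruct (HIo phi Hphi) as [d [Hd Hd']]. exists d. split; auto.
      intros y Hy. apply HL. split; auto.
    + apply (derivable_pt_lim_comp (fun y => exp (-2 * f y) * X) G); [| exact dG].
      replace (exp (-2 * f phi) * (-2 * deriv1 f phi) * X) with
        (exp (-2 * f phi) * (-2 * deriv1 f phi) * X + exp (-2 * f phi) * 0) by ring.
      apply (derivable_pt_lim_mult (fun y => exp (-2 * f y)) (fun _ => X));
        [| apply derivable_pt_lim_const].
      apply (derivable_pt_lim_comp (fun y => -2 * f y) exp); [| apply derivable_pt_lim_exp].
      apply derivable_pt_lim_scal, df.
Qed.

Lemma pde_of_reduction I L f G : open_set I -> reduces_to I L f G -> lagrangian_pde I L f.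
Proof.
  intros HIo Hr X phi Hd. destruct (reduction_partials I L f G HIo Hr X phi Hd) as [-> ->]. ring.
Qed.

Lemma sqrt_rescale a X : 0 < X -> sqrt (2 * (exp (-2 * a) * X)) = exp (- a) * sqrt (2 * X).
Proof.
  intro HX. replace (2 * (exp (-2 * a) * X)) with ((exp (- a) * exp (- a)) * (2 * X)).
  - rewrite sqrt_mult_alt, sqrt_square; [reflexivity | left; apply exp_pos |].
    pose proof (exp_pos (- a)). nra.
  - rewrite <- exp_plus. replace (- a + - a) with (-2 * a) by ring. ring.
Qed.

Lemma number_density_reduced I L f G : open_set I -> reduces_to I L f G ->
  forall X phi, dom2 I X phi ->
    exp (f phi) * sqrt (2 * X) * dX L X phi =
    sqrt (2 * (exp (-2 * f phi) * X)) * deriv1 G (exp (-2 * f phi) * X).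
Proof.
  intros HIo Hr X phi Hd. destruct (reduction_partials I L f G HIo Hr X phi Hd) as [-> _].
  rewrite sqrt_rescale by apply Hd.
  replace (exp (- f phi)) with (exp (f phi) * exp (-2 * f phi))
    by (rewrite <- exp_plus; f_equal; ring).
  ring.
Qed.

Lemma sqrt_double_derivative X : 0 < X ->
  derivable_pt_lim (fun x => sqrt (2 * x)) X (/ sqrt (2 * X)).
Proof.
  intro HX. assert (0 < sqrt (2 * X)) by (apply sqrt_lt_R0; lra).
  replace (/ sqrt (2 * X)) with (/ (2 * sqrt (2 * X)) * (2 * 1)) by (field; lra).
  apply (derivable_pt_lim_comp (fun x => 2 * x) sqrt);
    [apply derivable_pt_lim_scal, derivable_pt_lim_id | apply derivable_pt_lim_sqrt; lra].
Qed.

Section Lagrangian.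
Variables (I : R -> Prop) (L : R -> R -> R) (FL : nat -> nat -> R -> R -> R).
Hypothesis HIc : convex_set I.
Hypothesis HIo : open_set I.
Hypothesis HF0 : FL O O = L.
Hypothesis HF : smooth_family (dom2 I) FL.
Hypothesis HLX : forall X phi, dom2 I X phi -> dX L X phi <> 0.

Lemma dX_L X y : dom2 I X y -> dX L X y = FL 1%nat 0%nat X y.
Proof. intro Hd. apply dX_of_lim. rewrite <- HF0. apply HF, Hd. Qed.
Lemma dphi_L X y : dom2 I X y -> dphi L X y = FL 0%nat 1%nat X y.
Proof. intro Hd. apply dphi_of_lim. rewrite <- HF0. apply HF, Hd. Qed.
Lemma FL10_neq0 X y : dom2 I X y -> FL 1%nat 0%nat X y <> 0.
Proof. intro Hd. rewrite <- dX_L; auto. Qed.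

Lemma rho_FL X y : dom2 I X y -> rho L X y = 2 * X * FL 1%nat 0%nat X y - FL 0%nat 0%nat X y.
Proof. intro Hd. unfold rho. rewrite dX_L, HF0; auto. Qed.

Lemma rho_plus_pres X y : dom2 I X y -> rho L X y + pres L X y = 2 * X * FL 1%nat 0%nat X y.
Proof. intro Hd. rewrite rho_FL; auto. unfold pres. rewrite HF0. ring. Qed.

Lemma rho_dX X y : dom2 I X y ->
  dX (rho L) X y = FL 1%nat 0%nat X y + 2 * X * FL 2%nat 0%nat X y.
Proof.
  intro Hd. apply dX_of_lim.
  apply derivable_pt_lim_locally with (fun x => 2 * x * FL 1%nat 0%nat x y - FL 0%nat 0%nat x y).
  - destruct (dom2_open_X I X y Hd) as [d [Hd0 Hd1]]. exists d; split; auto.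
    intros x Hx. apply rho_FL; auto.
  - replace (FL 1%nat 0%nat X y + 2 * X * FL 2%nat 0%nat X y) with
      (2 * 1 * FL 1%nat 0%nat X y + mult_real_fct 2 id X * FL 2%nat 0%nat X y - FL 1%nat 0%nat X y)
      by (unfold mult_real_fct, id; ring).
    apply (derivable_pt_lim_minus _ (fun x => FL 0%nat 0%nat x y)); [| apply HF, Hd].
    apply (derivable_pt_lim_mult _ (fun x => FL 1%nat 0%nat x y)); [| apply HF, Hd].
    apply derivable_pt_lim_scal, derivable_pt_lim_id.
Qed.

Lemma rho_dphi X y : dom2 I X y ->
  dphi (rho L) X y = 2 * X * FL 1%nat 1%nat X y - FL 0%nat 1%nat X y.
Proof.
  intro Hd. apply dphi_of_lim.
  apply derivable_pt_lim_locally with (fun z => 2 * X * FL 1%nat 0%nat X z - FL 0%nat 0%nat X z).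
  - destruct (dom2_open_phi I HIo X y Hd) as [d [Hd0 Hd1]]. exists d; split; auto.
    intros z Hz. apply rho_FL; auto.
  - apply (derivable_pt_lim_minus _ (fun z => FL 0%nat 0%nat X z)); [| apply HF, Hd].
    apply derivable_pt_lim_scal, HF, Hd.
Qed.

Lemma L_differentiable X y : dom2 I X y ->
  differentiable_pt_lim L X y (FL 1%nat 0%nat X y) (FL 0%nat 1%nat X y).
Proof.
  intro Hd. apply differentiable_from_partials.
  - destruct (dom2_open I HIo X y Hd) as [d [Hd0 Hd1]]. exists d; split; auto.
    intros u v Hu Hv. rewrite <- HF0. apply HF; auto.
  - apply continuous2_at_iff, HF, Hd.
  - rewrite <- HF0. apply HF, Hd.
Qed.

(* From the first-order equation, n = exp(f) sqrt(2X) L_X solves the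
   isentropy equations: rho_X = (rho + p) n_X / n because
   n_X / n = 1/(2X) + L_XX / L_X, and rho_phi = (rho + p) n_phi / n because
   n_phi / n = f' + L_Xphi / L_X and -L_phi = 2 X L_X f'. *)
Lemma isentropic_of_pde f : smooth1 I f -> lagrangian_pde I L f ->
  exists n, isentropic_n I L n.
Proof.
  intros Hf Hpde.
  assert (HA : smooth1 I (fun y => exp (f y)))
    by (apply (smooth1_comp I (fun _ => True)); auto; apply smooth1_exp).
  assert (HB : smooth1 pos (fun x => sqrt (2 * x))).
  { apply (smooth1_comp pos pos); [apply smooth1_sqrt | |].
    - apply smooth1_mul; [apply smooth1_const | apply smooth1_id].
    - intros x Hx. unfold pos in *. lra. }
  destruct HA as [A [HA0 HA]], HB as [B [HB0 HB]].
  set (e := ex_mul (ex_mul (ex_phi A 0) (ex_X B 0)) (ex_fam FL 1 0)).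
  assert (Hok : admissible I e) by (simpl; auto).
  assert (Hev : forall X y, eval2 e X y = exp (f y) * sqrt (2 * X) * FL 1%nat 0%nat X y)
    by (intros; simpl; rewrite HA0, HB0; reflexivity).
  exists (eval2 e). split; [apply smooth2_eval2; auto | split].
  - intros X y Hd. rewrite Hev. pose proof (FL10_neq0 X y Hd). destruct Hd as [HX _].
    assert (0 < sqrt (2 * X)) by (apply sqrt_lt_R0; lra). pose proof (exp_pos (f y)).
    apply Rmult_integral_contrapositive; split; [apply Rmult_integral_contrapositive; split |]; lra.
  - intros X y Hd.
    assert (HX : 0 < X) by apply Hd. assert (Hy : I y) by apply Hd.
    assert (Hs : 0 < sqrt (2 * X)) by (apply sqrt_lt_R0; lra).
    assert (Hss : sqrt (2 * X) * sqrt (2 * X) = 2 * X) by (apply sqrt_sqrt; lra).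
    pose proof (exp_pos (f y)). pose proof (FL10_neq0 X y Hd).
    assert (HB1 : B 1%nat X = / sqrt (2 * X)).
    { apply (uniqueness_limite (B 0%nat) X); [apply HB; auto |].
      rewrite HB0. apply sqrt_double_derivative, HX. }
    assert (HA1 : A 1%nat y = exp (f y) * deriv1 f y).
    { apply (uniqueness_limite (A 0%nat) y); [apply HA; auto |]. rewrite HA0.
      apply (derivable_pt_lim_comp f exp); [apply (smooth1_derivable I); auto | apply derivable_pt_lim_exp]. }
    pose proof (Hpde X y Hd) as Hp. rewrite dphi_L, dX_L in Hp by auto.
    rewrite rho_dX, rho_dphi, rho_plus_pres, Hev by auto.
    rewrite (dX_of_lim _ _ _ _ (eval2_diffX I e Hok X y Hd)),
      (dphi_of_lim _ _ _ _ (eval2_diffphi I e Hok X y Hd)).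
    simpl. rewrite HA0, HB0, HB1, HA1. split.
    + set (s := sqrt (2 * X)) in *. rewrite <- Hss. field. repeat split; lra.
    + replace (FL 0%nat 1%nat X y) with (- (2 * X * FL 1%nat 0%nat X y * deriv1 f y)) by lra.
      field. repeat split; lra.
Qed.

Lemma L_constant_along_characteristics f : smooth1 I f -> lagrangian_pde I L f ->
  forall c, 0 < c -> forall y y', I y -> I y' ->
    L (c * exp (2 * f y)) y = L (c * exp (2 * f y')) y'.
Proof.
  intros Hf Hpde c Hc. apply (constant_on_convex I (fun y => L (c * exp (2 * f y)) y) HIc).
  intros y Hy.
  assert (Hd : dom2 I (c * exp (2 * f y)) y) by (split; auto; pose proof (exp_pos (2 * f y)); nra).
  assert (Hchar : derivable_pt_lim (fun z => c * exp (2 * f z)) y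
                    (c * (exp (2 * f y) * (2 * deriv1 f y)))).
  { apply derivable_pt_lim_scal.
    apply (derivable_pt_lim_comp (fun z => 2 * f z) exp); [| apply derivable_pt_lim_exp].
    apply derivable_pt_lim_scal, (smooth1_derivable I); auto. }
  pose proof (derivable_pt_lim_comp_2d L _ (fun z => z) y _ _ _ _
    (L_differentiable _ _ Hd) Hchar (derivable_pt_lim_id y)) as H.
  pose proof (Hpde _ _ Hd) as Hp. rewrite dphi_L, dX_L in Hp by auto.
  replace 0 with (FL 1%nat 0%nat (c * exp (2 * f y)) y * (c * (exp (2 * f y) * (2 * deriv1 f y))) +
                  FL 0%nat 1%nat (c * exp (2 * f y)) y * 1) by nra.
  exact H.
Qed.

Lemma reduction_of_pde f : smooth1 I f -> lagrangian_pde I L f -> exists G, reduces_to I L f G.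
Proof.
  intros Hf Hpde. destruct (classic (exists y0, I y0)) as [[y0 Hy0] | Hempty].
  2:{ exists (fun _ => 0). split; [exact Hf | split; [apply smooth1_const |]].
      intros X y [_ Hy]. exfalso. eauto. }
  exists (fun Y => L (Y * exp (2 * f y0)) y0). split; [exact Hf | split].
  - apply (smooth1_comp pos pos (fun x => L x y0) (fun Y => Y * exp (2 * f y0))).
    + exists (fun k x => FL k 0%nat x y0). split; [rewrite HF0; reflexivity |].
      intros k x Hx. apply HF. split; auto.
    + apply smooth1_mul; [apply smooth1_id | apply smooth1_const].
    + intros x Hx. unfold pos in *. pose proof (exp_pos (2 * f y0)). nra.
  - intros X y [HX Hy].
    assert (Hc : 0 < exp (-2 * f y) * X) by (pose proof (exp_pos (-2 * f y)); nra).
    rewrite <- (L_constant_along_characteristics f Hf Hpde _ Hc y y0 Hy Hy0).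
    f_equal. rewrite (Rmult_comm _ X), Rmult_assoc, <- exp_plus.
    replace (-2 * f y + 2 * f y) with 0 by ring. rewrite exp_0. ring.
Qed.

Section NumberDensity.
Variable n : R -> R -> R.
Hypothesis Hn : isentropic_n I L n.

Lemma n_derivable_X X y : dom2 I X y -> derivable_pt_lim (fun x => n x y) X (dX n X y).
Proof.
  intro Hd. destruct Hn as [[Fn [Hn0 HFn]] _]. subst n.
  rewrite (dX_of_lim _ _ _ _ (proj1 (proj2 (HFn O O X y Hd)))). apply HFn, Hd.
Qed.

Lemma n_derivable_phi X y : dom2 I X y -> derivable_pt_lim (fun z => n X z) y (dphi n X y).
Proof.
  intro Hd. destruct Hn as [[Fn [Hn0 HFn]] _]. subst n.
  rewrite (dphi_of_lim _ _ _ _ (proj2 (proj2 (HFn O O X y Hd)))). apply HFn, Hd.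
Qed.

Lemma n_neq0 X y : dom2 I X y -> n X y <> 0.
Proof. apply Hn. Qed.

Lemma isentropic_X X y : dom2 I X y ->
  FL 1%nat 0%nat X y + 2 * X * FL 2%nat 0%nat X y = 2 * X * FL 1%nat 0%nat X y * dX n X y / n X y.
Proof.
  intro Hd. destruct Hn as [_ [_ Heq]]. rewrite <- rho_dX, <- rho_plus_pres by exact Hd.
  apply Heq, Hd.
Qed.

Lemma isentropic_phi X y : dom2 I X y ->
  2 * X * FL 1%nat 1%nat X y - FL 0%nat 1%nat X y = 2 * X * FL 1%nat 0%nat X y * dphi n X y / n X y.
Proof.
  intro Hd. destruct Hn as [_ [_ Heq]]. rewrite <- rho_dphi, <- rho_plus_pres by exact Hd.
  apply Heq, Hd.
Qed.

(* The candidate factor exp(f(phi)), up to sign. *)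
Definition density_ratio (X y : R) : R := n X y / (sqrt (2 * X) * FL 1%nat 0%nat X y).

(* The X-equation says (ln n)_X = (ln (sqrt(2X) L_X))_X, so the ratio does
   not depend on X. *)
Lemma density_ratio_X_independent X y : dom2 I X y -> density_ratio X y = density_ratio 1 y.
Proof.
  intros [HX Hy]. apply (constant_on_convex pos (fun x => density_ratio x y)); [| | exact HX | red; lra].
  { intros a b c Ha Hc Hab Hbc. red in Ha, Hc |- *. lra. }
  intros x Hx. assert (Hdx : dom2 I x y) by (split; auto).
  assert (Hs : 0 < sqrt (2 * x)) by (apply sqrt_lt_R0; red in Hx; lra).
  assert (Hss : sqrt (2 * x) * sqrt (2 * x) = 2 * x) by (apply sqrt_sqrt; red in Hx; lra).
  pose proof (FL10_neq0 x y Hdx). pose proof (n_neq0 x y Hdx).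
  assert (Hden : sqrt (2 * x) * FL 1%nat 0%nat x y <> 0)
    by (apply Rmult_integral_contrapositive; split; lra).
  assert (HnX : dX n x y = (FL 1%nat 0%nat x y + 2 * x * FL 2%nat 0%nat x y) * n x y
                           / (2 * x * FL 1%nat 0%nat x y)).
  { rewrite (isentropic_X x y Hdx). field. red in Hx. repeat split; lra. }
  pose proof (derivable_pt_lim_div (fun x => n x y) _ x _ _ (n_derivable_X x y Hdx)
    (derivable_pt_lim_mult _ _ x _ _ (sqrt_double_derivative x Hx) (proj1 (proj2 (HF 1%nat 0%nat x y Hdx))))
    Hden) as Hquot.
  replace 0 with ((dX n x y * (sqrt (2 * x) * FL 1%nat 0%nat x y) -
                   (/ sqrt (2 * x) * FL 1%nat 0%nat x y + sqrt (2 * x) * FL 2%nat 0%nat x y) * n x y) /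
                  (sqrt (2 * x) * FL 1%nat 0%nat x y)²).
  - exact Hquot.
  - rewrite HnX. set (s := sqrt (2 * x)) in *. rewrite <- Hss. unfold Rsqr.
    field. repeat split; lra.
Qed.

Lemma density_ratio_sign : exists s, (s = 1 \/ s = -1) /\ forall y, I y -> 0 < s * density_ratio 1 y.
Proof.
  destruct (classic (exists y0, I y0)) as [[y0 Hy0] | Hempty].
  2:{ exists 1. split; [left; reflexivity |]. intros y Hy. exfalso. eauto. }
  assert (Hd1 : forall y, I y -> dom2 I 1 y) by (intros; split; auto; lra).
  assert (Hsign : forall y, I y -> 0 < density_ratio 1 y0 * density_ratio 1 y).
  { intros y Hy. apply (constant_sign I (density_ratio 1)); auto; clear y Hy.
    - intros y Hy. apply (continuity_pt_div (fun z => n 1 z) (fun z => sqrt (2 * 1) * FL 1%nat 0%nat 1 z)).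
      + apply derivable_continuous_pt. exists (dphi n 1 y). apply n_derivable_phi; auto.
      + apply continuity_pt_mult; [apply continuity_pt_const; intros a b; reflexivity |].
        apply derivable_continuous_pt. exists (FL 1%nat 1%nat 1 y). apply HF; auto.
      + assert (0 < sqrt (2 * 1)) by (apply sqrt_lt_R0; lra).
        pose proof (FL10_neq0 1 y (Hd1 y Hy)). apply Rmult_integral_contrapositive; split; lra.
    - intros y Hy. unfold density_ratio. assert (0 < sqrt (2 * 1)) by (apply sqrt_lt_R0; lra).
      pose proof (FL10_neq0 1 y (Hd1 y Hy)). pose proof (n_neq0 1 y (Hd1 y Hy)).
      unfold Rdiv. apply Rmult_integral_contrapositive; split; [lra |].
      apply Rinv_neq_0_compat, Rmult_integral_contrapositive; split; lra. }
  pose proof (Hsign y0 Hy0).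
  destruct (Rlt_dec 0 (density_ratio 1 y0)).
  - exists 1. split; [left; reflexivity |]. intros y Hy. pose proof (Hsign y Hy). nra.
  - exists (-1). split; [right; reflexivity |]. intros y Hy. pose proof (Hsign y Hy). nra.
Qed.

Lemma number_density_form : exists s f, (s = 1 \/ s = -1) /\ smooth1 I f /\
  forall X y, dom2 I X y -> n X y = s * exp (f y) * sqrt (2 * X) * dX L X y.
Proof.
  destruct density_ratio_sign as [s [Hs Hpos]].
  exists s, (fun y => ln (s * density_ratio 1 y)). split; [exact Hs | split].
  - apply (smooth1_comp I pos ln (fun y => s * density_ratio 1 y)); [apply smooth1_ln | | exact Hpos].
    apply smooth1_mul; [apply smooth1_const |]. unfold density_ratio, Rdiv.
    destruct Hn as [[Fn [Hn0 HFn]] _].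
    apply smooth1_mul.
    + exists (fun k z => Fn 0%nat k 1 z). split; [rewrite Hn0; reflexivity |].
      intros k z Hz. apply HFn. split; auto; lra.
    + apply (smooth1_comp I (fun x => x <> 0) (fun x => / x)); [apply smooth1_inv | |].
      * apply smooth1_mul; [apply smooth1_const |].
        exists (fun k z => FL 1%nat k 1 z). split; [reflexivity |].
        intros k z Hz. apply HF. split; auto; lra.
      * intros z Hz. assert (Hd : dom2 I 1 z) by (split; auto; lra).
        pose proof (FL10_neq0 1 z Hd). assert (0 < sqrt (2 * 1)) by (apply sqrt_lt_R0; lra).
        apply Rmult_integral_contrapositive; split; lra.
  - intros X y Hd. rewrite exp_ln by (apply Hpos, Hd).
    rewrite <- (density_ratio_X_independent X y Hd), dX_L by exact Hd. unfold density_ratio.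
    assert (0 < sqrt (2 * X)) by (apply sqrt_lt_R0; destruct Hd; lra).
    pose proof (FL10_neq0 X y Hd).
    destruct Hs as [-> | ->]; field; split; lra.
Qed.

Lemma pde_of_number_density s f : s <> 0 -> smooth1 I f ->
  (forall X y, dom2 I X y -> n X y = s * exp (f y) * sqrt (2 * X) * dX L X y) ->
  lagrangian_pde I L f.
Proof.
  intros Hs Hf Hform X y Hd.
  assert (Hy : I y) by apply Hd. assert (Hsq : 0 < sqrt (2 * X)) by (apply sqrt_lt_R0; destruct Hd; lra).
  pose proof (FL10_neq0 X y Hd). pose proof (exp_pos (f y)).
  assert (Hnphi : dphi n X y = s * (exp (f y) * deriv1 f y) * sqrt (2 * X) * FL 1%nat 0%nat X y
                             + s * exp (f y) * sqrt (2 * X) * FL 1%nat 1%nat X y).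
  { apply (uniqueness_limite (fun z => n X z) y); [apply n_derivable_phi, Hd |].
    apply (derivable_pt_lim_locally _ (fun z => (s * exp (f z) * sqrt (2 * X)) * FL 1%nat 0%nat X z)).
    { destruct (dom2_open_phi I HIo X y Hd) as [d [Hd0 Hd1]]. exists d; split; auto.
      intros z Hz. rewrite Hform, dX_L; auto. }
    replace (s * (exp (f y) * deriv1 f y) * sqrt (2 * X) * FL 1%nat 0%nat X y +
             s * exp (f y) * sqrt (2 * X) * FL 1%nat 1%nat X y) with
      ((s * (exp (f y) * deriv1 f y) * sqrt (2 * X) + s * exp (f y) * 0) * FL 1%nat 0%nat X y +
       s * exp (f y) * sqrt (2 * X) * FL 1%nat 1%nat X y) by ring.
    apply (derivable_pt_lim_mult (fun z => s * exp (f z) * sqrt (2 * X)) (fun z => FL 1%nat 0%nat X z));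
      [| apply HF, Hd].
    apply (derivable_pt_lim_mult (fun z => s * exp (f z)) (fun _ => sqrt (2 * X)));
      [| apply derivable_pt_lim_const].
    apply (derivable_pt_lim_scal (fun z => exp (f z))).
    apply (derivable_pt_lim_comp f exp); [apply (smooth1_derivable I); auto | apply derivable_pt_lim_exp]. }
  pose proof (isentropic_phi X y Hd) as E. rewrite Hnphi, Hform in E by exact Hd.
  rewrite dphi_L, dX_L in * by exact Hd.
  replace (FL 0%nat 1%nat X y) with
    (2 * X * FL 1%nat 1%nat X y - 2 * X * FL 1%nat 0%nat X y *
      (s * (exp (f y) * deriv1 f y) * sqrt (2 * X) * FL 1%nat 0%nat X y +
       s * exp (f y) * sqrt (2 * X) * FL 1%nat 1%nat X y) /
      (s * exp (f y) * sqrt (2 * X) * FL 1%nat 0%nat X y)) by lra.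
  field. repeat split; lra.
Qed.

End NumberDensity.
End Lagrangian.

Theorem mainTheorem1 (I : R -> Prop) (L : R -> R -> R)
  (HI : is_open_intvl I)
  (HL : smooth2 (dom2 I) L)
  (HLX : forall X phi, dom2 I X phi -> dX L X phi <> 0) :
  ((exists n, isentropic_n I L n) <-> (exists f G, reduces_to I L f G)) /\
  (forall n, isentropic_n I L n ->
     exists f G (s : R), reduces_to I L f G /\ (s = 1 \/ s = -1) /\
       forall X phi, dom2 I X phi ->
         n X phi = s * exp (f phi) * sqrt (2 * X) * dX L X phi /\
         n X phi = s * sqrt (2 * (exp (-2 * f phi) * X))
                     * deriv1 G (exp (-2 * f phi) * X)) /\
  (forall f G, reduces_to I L f G ->
     forall X phi, dom2 I X phi ->
       - dphi L X phi = 2 * X * dX L X phi * deriv1 f phi).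
Proof.
  destruct HI as [HIc HIo]. destruct HL as [FL [HF0 HF]].
  assert (Hfrom_n : forall n, isentropic_n I L n -> exists f G s,
    reduces_to I L f G /\ (s = 1 \/ s = -1) /\
    forall X phi, dom2 I X phi -> n X phi = s * exp (f phi) * sqrt (2 * X) * dX L X phi).
  { intros n Hn.
    destruct (number_density_form I L FL HIc HF0 HF HLX n Hn) as [s [f [Hs [Hf Hform]]]].
    assert (Hpde : lagrangian_pde I L f).
    { apply (pde_of_number_density I L FL HIo HF0 HF HLX n Hn s); auto.
      destruct Hs as [-> | ->]; lra. }
    destruct (reduction_of_pde I L FL HIc HIo HF0 HF f Hf Hpde) as [G HG].
    exists f, G, s. auto. }
  split; [split | split].
  - intros [n Hn]. destruct (Hfrom_n n Hn) as [f [G [s [HG _]]]]. eauto.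
  -
    intros [f [G HG]]. apply (isentropic_of_pde I L FL HIo HF0 HF HLX f); [apply HG |].
    apply (pde_of_reduction I L f G HIo HG).
  - intros n Hn. destruct (Hfrom_n n Hn) as [f [G [s [HG [Hs Hform]]]]].
    exists f, G, s. split; [exact HG | split; [exact Hs |]].
    intros X phi Hd. split; [apply Hform, Hd |].
    rewrite Hform by exact Hd.
    transitivity (s * (exp (f phi) * sqrt (2 * X) * dX L X phi)); [ring |].
    rewrite (number_density_reduced I L f G HIo HG X phi Hd). ring.
  - intros f G HG. exact (pde_of_reduction I L f G HIo HG).
Qed.
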